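(* Let $k\in\mathbb{P}$ and let $b\geq 2$ be an integer. Then the sequence $B=\left(1,\frac{b^2-1}{b-1},\dots,\frac{b^k-1}{b-1}\right)$ is orderly, i.e., $opt_B(M)=grd_B(M)$ for all $M\in\mathbb{P}$.
   Context: $\mathbb{P}$ denotes the positive integers and $\mathbb{N}$ the nonnegative integers. For a sequence $B=(b_1,\dots,b_k)$ of positive integers with $1=b_1<b_2<\cdots<b_k$ and $M\in\mathbb{N}$, $opt_B(M)=\min\{\sum_{i=1}^k x_i : \sum_{i=1}^k b_i x_i=M,\ x_i\in\mathbb{N}\}$. $grd_B(M)$ denotes the number of parts used by the greedy strategy: take as many copies of $b_k$ as possible (without exceeding $M$), then as many copies of $b_{k-1}$ as possible for the remainder, and so on down to $b_1=1$. $B$ is called orderly if $opt_B(M)=grd_B(M)$ for all $M>0$. *)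

From mathcomp Require Import all_boot.
Set Implicit Arguments. Unset Strict Implicit. Unset Printing Implicit Defensive.

(* A coin system B = (b_1, ..., b_k) is represented as a seq nat, listed in
   increasing order b_1 < ... < b_k. A multiplicity vector x is a seq nat
   of the same length; x_i copies of b_i. *)

Definition value (B x : seq nat) : nat := \sum_(i < size B) nth 0 B i * nth 0 x i.
Definition parts (B x : seq nat) : nat := \sum_(i < size B) nth 0 x i.

Definition representation (B : seq nat) (M : nat) (x : seq nat) : Prop :=
  size x = size B /\ value B x = M.

Definition is_opt (B : seq nat) (M n : nat) : Prop :=
  (exists x, representation B M x /\ parts B x = n) /\
  (forall x, representation B M x -> n <= parts B x).

(* greedy on coins listed in DECREASING order *)
Fixpoint grd_desc (C : seq nat) (M : nat) : nat :=
  match C with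
  | [::] => 0
  | c :: C' => M %/ c + grd_desc C' (M %% c)
  end.

Definition grd (B : seq nat) (M : nat) : nat := grd_desc (rev B) M.

Definition orderly (B : seq nat) : Prop := forall M, 0 < M -> is_opt B M (grd B M).

Definition repunit_seq (b k : nat) : seq nat :=
  [seq (b ^ i.+1 - 1) %/ (b - 1) | i <- iota 0 k].

(* Write r_i = 1 + b + ... + b^i, so that r_(i+1) = b r_i + 1. Let g_m(N) be the
   number of coins the greedy algorithm uses on the first m coins r_0, ..., r_(m-1).
   Adding 1 to the amount saves at most b - 1 greedy coins, since the only way
   to save coins is to complete a top coin r_m out of r_m - 1 = b r_(m-1), which
   costs exactly b coins. From this, adding the coin r_(m+1) never increases the
   greedy count: if N = q r_(m+1) + t, then also N = q b r_m + (t + q), and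
   g_(m+1)(N) >= q b + g_(m+1)(t) - q (b - 1) = g_(m+2)(N). Finally, a coin
   system in which the greedy count is monotone in the set of coins is orderly:
   by induction on k, g_k(sum_i f_i r_i) <= f_(k-1) + g_(k-1)(sum_(i<k-1) f_i r_i). *)
From mathcomp Require Import all_boot zify.

Section Greedy.

Variable c : nat -> nat.

Definition greedy (m N : nat) : nat := grd_desc (rev (mkseq c m)) N.

Lemma greedy0n N : greedy 0 N = 0.
Proof. by []. Qed.

Lemma greedyS m N : greedy m.+1 N = N %/ c m + greedy m (N %% c m).
Proof. by rewrite /greedy /mkseq -addn1 iotaD map_cat rev_cat. Qed.

Lemma greedyn0 m : greedy m 0 = 0.
Proof. by elim: m => // m IH; rewrite greedyS div0n mod0n IH. Qed.

Lemma greedy_small m N : N < c m -> greedy m.+1 N = greedy m N.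
Proof. by move=> ltNc; rewrite greedyS divn_small // modn_small. Qed.

Lemma greedy_representation m N : c 0 = 1 ->
  exists x, [/\ size x = m.+1, \sum_(i < m.+1) c i * nth 0 x i = N
              & \sum_(i < m.+1) nth 0 x i = greedy m.+1 N].
Proof.
move=> c0; elim: m N => [|m IH] N.
  by exists [:: N]; rewrite !big_ord1 c0 mul1n greedyS c0 divn1 modn1 greedyn0 addn0.
have [x [size_x value_x parts_x]] := IH (N %% c m.+1).
have nth_x (i : 'I_m.+1) : nth 0 (rcons x (N %/ c m.+1)) i = nth 0 x i.
  by rewrite nth_rcons size_x ltn_ord.
have nth_last : nth 0 (rcons x (N %/ c m.+1)) m.+1 = N %/ c m.+1.
  by rewrite nth_rcons size_x ltnn eqxx.
exists (rcons x (N %/ c m.+1)); split; first by rewrite size_rcons size_x.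
  rewrite big_ord_recr /= nth_last; under eq_bigr => i _ do rewrite nth_x.
  by rewrite value_x addnC mulnC -divn_eq.
rewrite big_ord_recr /= nth_last; under eq_bigr => i _ do rewrite nth_x.
by rewrite parts_x [greedy m.+2 N]greedyS addnC.
Qed.

Hypothesis c_gt0 : forall i, 0 < c i.

Lemma greedyMDl m a N : greedy m.+1 (a * c m + N) = a + greedy m.+1 N.
Proof. by rewrite !greedyS divnMDl // modnMDl addnA. Qed.

Hypothesis greedy_mono : forall m N, 0 < m -> greedy m.+1 N <= greedy m N.

Lemma greedy_le_parts k (f : nat -> nat) :
  greedy k (\sum_(i < k) c i * f i) <= \sum_(i < k) f i.
Proof.
elim: k => [|k IH]; first by rewrite greedy0n.
rewrite !big_ord_recr /= addnC (mulnC (c k)) greedyMDl [leqRHS]addnC leq_add2l.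
case: k IH => [|k] IH; first by rewrite big_ord0 greedyn0.
by apply: leq_trans IH; apply: greedy_mono.
Qed.

Lemma orderly_mkseq k : c 0 = 1 -> 0 < k -> orderly (mkseq c k).
Proof.
move=> c0 k_gt0 M _.
have valueE x : value (mkseq c k) x = \sum_(i < k) c i * nth 0 x i.
  by rewrite /value size_mkseq; apply: eq_bigr => i _; rewrite nth_mkseq.
rewrite /is_opt /representation /parts size_mkseq; split; last first.
  by move=> x [_ <-]; rewrite valueE; apply: greedy_le_parts.
case: k k_gt0 valueE => // k _ valueE.
have [x [size_x value_x parts_x]] := greedy_representation k M c0.
by exists x; rewrite valueE.
Qed.

End Greedy.

Fixpoint repunit (b i : nat) : nat :=
  if i is i'.+1 then b * repunit b i' + 1 else 1.

Lemma repunit_gt0 b i : 0 < repunit b i.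
Proof. by case: i => //= i; rewrite addn1. Qed.

Lemma repunitM_subn1 b i : repunit b i * (b - 1) = b ^ i.+1 - 1.
Proof.
elim: i => [|i IH]; first by rewrite mul1n expn1.
rewrite /= expnS mulnDl mul1n -mulnA IH mulnBr muln1.
case: b {IH} => // b; have : b.+1 <= b.+1 * b.+1 ^ i.+1 by rewrite leq_pmulr ?expn_gt0.
lia.
Qed.

Lemma repunit_seqE b k : 1 < b -> repunit_seq b k = mkseq (repunit b) k.
Proof.
move=> b_gt1; apply: eq_map => i.
by rewrite -repunitM_subn1 mulnK // subn_gt0.
Qed.

Section Repunit.

Variable b : nat.

Local Notation g := (greedy (repunit b)).

Let greedy_repunitMDl := @greedyMDl (repunit b) (repunit_gt0 b).

Lemma greedy_repunit_pred m : g m (repunit b m).-1 <= b.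
Proof.
case: m => [|m]; first by rewrite greedyn0.
by rewrite /= addn1 -[_ * _]addn0 greedy_repunitMDl greedyn0 addn0.
Qed.

Lemma greedy_repunit_succ m s : g m s <= g m s.+1 + (b - 1).
Proof.
elim: m s => [|m IH] s; first by rewrite !greedy0n.
set d := repunit b m; have d_gt0 : 0 < d by apply: repunit_gt0.
have t_lt_d : s %% d < d by rewrite ltn_mod.
have -> : s.+1 = s %/ d * d + (s %% d).+1 by rewrite {1}(divn_eq s d) addnS.
rewrite {1}(divn_eq s d) !greedy_repunitMDl greedy_small //.
have [t1_eq_d|t1_lt_d] : (s %% d).+1 = d \/ (s %% d).+1 < d by lia.
- have t_eq : s %% d = d.-1 by rewrite -{2}t1_eq_d.
  have g_d : g m.+1 d = 1.
    by rewrite -[d]mul1n -[1 * d]addn0 greedy_repunitMDl greedyn0.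
  rewrite t1_eq_d t_eq g_d.
  have := greedy_repunit_pred m; rewrite -/d; lia.
- by rewrite greedy_small // -addnA leq_add2l IH.
Qed.

Lemma greedy_repunit_add m s q : g m s <= g m (s + q) + q * (b - 1).
Proof.
elim: q => [|q IH]; first by rewrite addn0 mul0n addn0.
have := greedy_repunit_succ m (s + q); rewrite addnS; lia.
Qed.

Hypothesis b_gt0 : 0 < b.

Lemma greedy_repunit_mono m N : 0 < m -> g m.+1 N <= g m N.
Proof.
case: m => // m _; set d := repunit b m.+1.
have d_gt0 : 0 < d by apply: repunit_gt0.
have t_lt_d : N %% d < d by rewrite ltn_mod.
have N_eq : N = N %/ d * d + N %% d := divn_eq N d.
rewrite {1}N_eq greedy_repunitMDl (greedy_small _ _ _ t_lt_d).
move: (N %/ d) (N %% d) N_eq => q t ->.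
have -> : q * d + t = (q * b) * repunit b m + (t + q) by rewrite /d /=; nia.
rewrite greedy_repunitMDl.
have := greedy_repunit_add m.+1 t q; nia.
Qed.

End Repunit.

Theorem lemma3p1 (k b : nat) : 0 < k -> 2 <= b -> orderly (repunit_seq b k).
Proof.
move=> k_gt0 b_gt1; rewrite repunit_seqE //.
apply: orderly_mkseq => //; first exact: repunit_gt0.
by move=> m N; apply: greedy_repunit_mono; apply: ltnW.
Qed.
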